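(* If $n$ and $r$ are positive integers with $n\ge 2r+2$, then $$\rho_2(K(n+1,r+1))\ \ge\ \rho_2(K(n,r)).$$
   Context: For integers $n\ge 2r$, the Kneser graph $K(n,r)$ has as vertices the $r$-element subsets of $[n]=\{1,\dots,n\}$, two vertices being adjacent iff they are disjoint. A $2$-packing of a graph $G$ is a set of vertices pairwise at distance at least $3$ in $G$; $\rho_2(G)$ is the maximum cardinality of a $2$-packing. *)

From mathcomp Require Import all_boot.
Set Implicit Arguments. Unset Strict Implicit. Unset Printing Implicit Defensive.

Definition kneser_vertex (n r : nat) (u : {set 'I_n}) : bool := #|u| == r.

Definition kneser_adj (n r : nat) (u v : {set 'I_n}) : bool :=
  [&& kneser_vertex r u, kneser_vertex r v & [disjoint u & v]].

Definition kneser_dist_le2 (n r : nat) (u v : {set 'I_n}) : bool :=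
  [|| u == v, kneser_adj r u v
    | [exists w : {set 'I_n}, kneser_adj r u w && kneser_adj r w v]].

Definition two_packing (n r : nat) (P : {set {set 'I_n}}) : bool :=
  [forall u in P, kneser_vertex r u] &&
  [forall u in P, forall v in P, (u != v) ==> ~~ kneser_dist_le2 r u v].

Definition rho2 (n r : nat) : nat :=
  \max_(P : {set {set 'I_n}} | two_packing r P) #|P|.

From mathcomp Require Import all_boot.
Set Implicit Arguments. Unset Strict Implicit. Unset Printing Implicit Defensive.

(* Add the new point n to every member of a 2-packing of K(n,r).  Any two of
   the resulting (r+1)-sets share n, so they are not adjacent in K(n+1,r+1);
   a common neighbour W of two of them avoids n, hence lives in [n], and any
   r-subset of W is a common neighbour of the original sets in K(n,r).  The
   images therefore form a 2-packing of K(n+1,r+1) of the same size.  Below, the new point is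
   ord_max and lift ord_max embeds 'I_n into 'I_n.+1. *)

Lemma exists_subset_card (T : finType) (A : {set T}) k :
  k <= #|A| -> exists2 B : {set T}, B \subset A & #|B| = k.
Proof.
move=> le_kA; exists [set x in take k (enum A)].
  by apply/subsetP => x; rewrite inE => /mem_take; rewrite mem_enum.
rewrite cardsE (card_uniqP _); last by rewrite take_uniq ?enum_uniq.
by rewrite size_takel // -cardE.
Qed.

Lemma disjoint_imset_pre (aT rT : finType) (f : aT -> rT) (A : {set aT})
    (B : {set rT}) :
  [disjoint f @: A & B] = [disjoint A & f @^-1: B].
Proof. by rewrite !disjoints_subset sub_imset_pre preimsetC. Qed.

Section AddMax.
Variable n : nat.

Lemma max_notin_lift_imset (A : {set 'I_n}) : ord_max \notin lift ord_max @: A.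
Proof. by apply/imsetP => -[i _ /eqP]; rewrite (negbTE (neq_lift _ _)). Qed.

Lemma lift_max_preimsetK (w : {set 'I_n.+1}) :
  ord_max \notin w -> lift ord_max @: (lift ord_max @^-1: w) = w.
Proof.
move=> wmax; apply/setP => j; case: (unliftP ord_max j) => [i ->|->].
  by rewrite mem_imset ?inE //; apply: lift_inj.
by rewrite (negbTE wmax) (negbTE (max_notin_lift_imset _)).
Qed.

Lemma card_lift_max_preimset (w : {set 'I_n.+1}) :
  ord_max \notin w -> #|lift ord_max @^-1: w| = #|w|.
Proof.
move=> wmax; rewrite -{2}(lift_max_preimsetK wmax) card_imset //.
exact: lift_inj.
Qed.

Definition add_max (u : {set 'I_n}) : {set 'I_n.+1} :=
  ord_max |: lift ord_max @: u.

Lemma max_in_add_max u : ord_max \in add_max u.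
Proof. exact: setU11. Qed.

Lemma mem_lift_add_max u i : (lift ord_max i \in add_max u) = (i \in u).
Proof.
rewrite in_setU1 eq_sym (negbTE (neq_lift _ _)) mem_imset //; exact: lift_inj.
Qed.

Lemma add_max_inj : injective add_max.
Proof.
by move=> u v eq_uv; apply/setP => i; rewrite -!mem_lift_add_max eq_uv.
Qed.

Lemma card_add_max u : #|add_max u| = #|u|.+1.
Proof.
by rewrite cardsU1 max_notin_lift_imset card_imset //; apply: lift_inj.
Qed.

Lemma disjoint_add_max u (w : {set 'I_n.+1}) :
  [disjoint add_max u & w] =
  (ord_max \notin w) && [disjoint u & lift ord_max @^-1: w].
Proof.
rewrite -disjoint_imset_pre -disjointU1.
by apply: eq_disjoint => x; rewrite !inE.
Qed.

Lemma kneser_vertex_add_max r u :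
  kneser_vertex r.+1 (add_max u) = kneser_vertex r u.
Proof. by rewrite /kneser_vertex card_add_max eqSS. Qed.

Lemma kneser_nadj_add_max r u v : ~~ kneser_adj r.+1 (add_max u) (add_max v).
Proof. by rewrite /kneser_adj disjoint_add_max max_in_add_max !andbF. Qed.

Lemma kneser_common_neighbour_add_max r u v w :
  kneser_adj r.+1 (add_max u) w -> kneser_adj r.+1 w (add_max v) ->
  exists w', kneser_adj r u w' && kneser_adj r w' v.
Proof.
rewrite /kneser_adj !kneser_vertex_add_max (disjoint_sym w) !disjoint_add_max.
case/and3P => ru /eqP card_w /andP[wmax uw] /and3P[_ rv /andP[_ vw]].
have [w' sub_w' card_w'] :
    exists2 w' : {set 'I_n}, w' \subset lift ord_max @^-1: w & #|w'| = r.
  by apply: exists_subset_card; rewrite card_lift_max_preimset // card_w.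
exists w'; rewrite ru rv /kneser_vertex card_w' eqxx (disjointWr sub_w' uw).
by rewrite disjoint_sym (disjointWr sub_w' vw).
Qed.

Lemma kneser_dist_le2_add_max r u v :
  kneser_dist_le2 r.+1 (add_max u) (add_max v) -> kneser_dist_le2 r u v.
Proof.
case/or3P => [/eqP/add_max_inj-> | uv | /existsP[w /andP[uw wv]]].
- by rewrite /kneser_dist_le2 eqxx.
- by move: (kneser_nadj_add_max r u v); rewrite uv.
have [w' uw'v] := kneser_common_neighbour_add_max uw wv.
by apply/or3P/Or33/existsP; exists w'.
Qed.

Lemma two_packing_add_max r (P : {set {set 'I_n}}) :
  two_packing r P -> two_packing r.+1 (add_max @: P).
Proof.
case/andP => /forall_inP vertP /forall_inP farP; apply/andP; split.
  apply/forall_inP => _ /imsetP[u uP ->].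
  by rewrite kneser_vertex_add_max vertP.
apply/forall_inP => _ /imsetP[u uP ->]; apply/forall_inP => _ /imsetP[v vP ->].
apply/implyP => neq_uv; apply: contra (@kneser_dist_le2_add_max r u v) _.
have /forall_inP/(_ v vP)/implyP := farP u uP; apply.
by apply: contraNneq neq_uv => ->.
Qed.

End AddMax.

Theorem theorem4p5 (n r : nat) :
  0 < n -> 0 < r -> 2 * r + 2 <= n ->
  rho2 n r <= rho2 n.+1 r.+1.
Proof.
move=> _ _ _; apply/bigmax_leqP => P packP.
rewrite -(card_imset _ (@add_max_inj n)) /rho2.
by apply: leq_bigmax_cond; apply: two_packing_add_max.
Qed.
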